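(* Let $X, Y \subseteq \omega$. If there exists an embedding $f : \mathcal{B}^X \hookrightarrow \mathcal{K}_2^Y$ then $X' \le_T Y$.
   Context: A partial combinatory algebra (pca) is a set $A$ with a partial binary application $\cdot$ containing distinct elements $\mathrm{s},\mathrm{k}$ with $\mathrm{k}ab\downarrow = a$, $\mathrm{s}ab\downarrow$, and $\mathrm{s}abc \simeq (ac)(bc)$. Given pcas $\mathcal{A},\mathcal{B}$, an embedding $\mathcal{A}\hookrightarrow\mathcal{B}$ is an injection $f$ such that whenever $aa'\downarrow$ in $\mathcal{A}$, $f(a)f(a')\downarrow = f(aa')$. Kleene's second model $\mathcal{K}_2$ is taken with carrier $\omega^\omega$ and application $g\cdot h = \Phi^{g\oplus h}_{g(0)}$, where $\Phi_e$ is the $e$-th Turing functional and $g\cdot h$ is defined iff the function on the right is total. Van Oosten's sequential computation model $\mathcal{B}$ is the same definition but with carrier the set of partial functions $\omega\rightharpoonup\omega$ (application always defined). For $X\subseteq\omega$, $\mathcal{K}_2^X$ is the sub-pca of $X$-computable total functions and $\mathcal{B}^X$ the sub-pca of partial $X$-computable functions. $X'$ denotes the halting set relativized to $X$. *)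

From Stdlib Require Import Arith.

Definition pair (x y : nat) : nat := (x + y) * (x + y + 1) / 2 + y.

Fixpoint unpair (z : nat) : nat * nat :=
  match z with
  | 0 => (0, 0)
  | S z' => let (x, y) := unpair z' in
            match x with
            | 0 => (S y, 0)
            | S x' => (x', S y)
            end
  end.

Inductive code : Type :=
| cZero : code
| cSucc : code
| cId   : code
| cFst  : code
| cSnd  : code
| cOra  : code
| cComp : code -> code -> code       (* cComp f g = f o g *)
| cPair : code -> code -> code
| cRec  : code -> code -> code
| cMu   : code -> code.

(* Goedel numbering (injective); non-code numbers index the empty function. *)
Fixpoint encode (c : code) : nat :=
  match c with
  | cZero => pair 0 0
  | cSucc => pair 1 0
  | cId => pair 2 0
  | cFst => pair 3 0
  | cSnd => pair 4 0
  | cOra => pair 5 0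
  | cComp f g => pair 6 (pair (encode f) (encode g))
  | cPair f g => pair 7 (pair (encode f) (encode g))
  | cRec f g => pair 8 (pair (encode f) (encode g))
  | cMu f => pair 9 (encode f)
  end.

Inductive eval (o : nat -> option nat) : code -> nat -> nat -> Prop :=
| eZero x : eval o cZero x 0
| eSucc x : eval o cSucc x (S x)
| eId x : eval o cId x x
| eFst x : eval o cFst x (fst (unpair x))
| eSnd x : eval o cSnd x (snd (unpair x))
| eOra x v : o x = Some v -> eval o cOra x v
| eComp f g x y z : eval o g x y -> eval o f y z -> eval o (cComp f g) x z
| ePair f g x a b : eval o f x a -> eval o g x b -> eval o (cPair f g) x (pair a b)
| eRec0 f g x a : eval o f x a -> eval o (cRec f g) (pair x 0) a
| eRecS f g x n r a : eval o (cRec f g) (pair x n) r ->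
    eval o g (pair x (pair n r)) a -> eval o (cRec f g) (pair x (S n)) a
| eMu f x y : eval o f (pair x y) 0 ->
    (forall z, z < y -> exists v, v <> 0 /\ eval o f (pair x z) v) ->
    eval o (cMu f) x y.

Definition Phi (e : nat) (o : nat -> option nat) (n m : nat) : Prop :=
  exists c, encode c = e /\ eval o c n m.

Definition join (g h : nat -> option nat) : nat -> option nat :=
  fun n => if Nat.odd n then h (Nat.div2 n) else g (Nat.div2 n).

Definition tot (g : nat -> nat) : nat -> option nat := fun n => Some (g n).

Definition chi (X : nat -> bool) : nat -> option nat :=
  fun n => Some (if X n then 1 else 0).

Definition K2app (g h k : nat -> nat) : Prop :=
  forall n, Phi (g 0) (join (tot g) (tot h)) n (k n).

Definition Bapp (g h k : nat -> option nat) : Prop :=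
  forall n m, k n = Some m <->
    exists e, g 0 = Some e /\ Phi e (join g h) n m.

Definition partial_computable_in (X : nat -> bool) (a : nat -> option nat) : Prop :=
  exists e, forall n m, a n = Some m <-> Phi e (chi X) n m.

Definition computable_in (Y : nat -> bool) (g : nat -> nat) : Prop :=
  exists e, forall n, Phi e (chi Y) n (g n).

Definition BX (X : nat -> bool) : Type :=
  { a : nat -> option nat | partial_computable_in X a }.

Definition K2Y (Y : nat -> bool) : Type :=
  { g : nat -> nat | computable_in Y g }.

Definition pca_embedding (X Y : nat -> bool) (f : BX X -> K2Y Y) : Prop :=
  (forall a b, proj1_sig (f a) = proj1_sig (f b) -> proj1_sig a = proj1_sig b) /\
  (forall a a' k : BX X, Bapp (proj1_sig a) (proj1_sig a') (proj1_sig k) ->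
     K2app (proj1_sig (f a)) (proj1_sig (f a')) (proj1_sig (f k))).

Definition jump (X : nat -> bool) (e : nat) : Prop := exists m, Phi e (chi X) e m.

Definition turing_le (A : nat -> Prop) (Y : nat -> bool) : Prop :=
  exists e, forall n, (A n -> Phi e (chi Y) n 1) /\ (~ A n -> Phi e (chi Y) n 0).

From Stdlib Require Import Arith Lia List Classical ClassicalEpsilon FunctionalExtensionality.
Import ListNotations.

(* Write c_n for the constant function n in B^X. For s the constant function whose value codes
   successor, s.c_n = c_(n+1); for h with h(0) a code of "read n and X off the oracle h (+) c_n,
   run Phi_n^X(n), output 0" and h(k+1) = X(k), h.c_n is c_0 if n is in X' and the empty
   function otherwise. The embedding f carries these equations into K2^Y, where applications
   can be evaluated relative to Y uniformly in the codes of the arguments. Hence g_n := f(c_n) is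
   uniformly Y-computable, by iterating f(s) from f(c_0), and so is f(h).g_n = f(h.c_n). As f is
   injective, f(c_0) and f(empty) differ at some p, and n is in X' iff (f(h).g_n)(p) = f(c_0)(p).
   Uniform evaluation needs a universal code: it runs an abstract machine for [eval] step by step
   and searches for a halting time. *)

Lemma pair_S_0 b : pair (S b) 0 = S (pair 0 b).
Proof.
  unfold pair; rewrite !Nat.add_0_r, Nat.add_0_l.
  replace (S b * (S b + 1)) with (b * (b + 1) + (b + 1) * 2) by lia.
  rewrite Nat.div_add by lia; lia.
Qed.

Lemma pair_S_r a b : pair a (S b) = S (pair (S a) b).
Proof. unfold pair; replace (a + S b) with (S a + b) by lia; lia. Qed.

Lemma unpair_pair x y : unpair (pair x y) = (x, y).
Proof.
  remember (x + y) as s eqn:Hs; revert x y Hs.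
  induction s as [|s IHs]; intros x y Hs.
  - assert (x = 0) as -> by lia; assert (y = 0) as -> by lia; reflexivity.
  - induction y as [|y IHy] in x, Hs |- *.
    + destruct x as [|x]; [lia|].
      rewrite pair_S_0; cbn [unpair]; rewrite (IHs 0 x) by lia; reflexivity.
    + rewrite pair_S_r; cbn [unpair]; rewrite (IHy (S x)) by lia; reflexivity.
Qed.

Lemma pair_unpair z : pair (fst (unpair z)) (snd (unpair z)) = z.
Proof.
  induction z as [|z IH]; [reflexivity|].
  cbn [unpair]; destruct (unpair z) as [[|x] y]; cbn [fst snd] in IH |- *.
  - rewrite pair_S_0; congruence.
  - rewrite pair_S_r; congruence.
Qed.

Lemma pair_inj a b c d : pair a b = pair c d -> a = c /\ b = d.
Proof.
  intro E; apply (f_equal unpair) in E; rewrite !unpair_pair in E.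
  injection E; auto.
Qed.

Arguments pair : simpl never.
Arguments unpair : simpl never.

Ltac inj_pairs := repeat match goal with
  | H : pair _ _ = pair _ _ |- _ => apply pair_inj in H; destruct H
  | H : S _ = S _ |- _ => injection H as H
  end; try discriminate; try lia.

Ltac unpair_simpl := repeat progress (cbn; rewrite ?unpair_pair).

Lemma encode_inj c1 c2 : encode c1 = encode c2 -> c1 = c2.
Proof.
  revert c2; induction c1; destruct c2; cbn; intro E; inj_pairs;
    f_equal; auto.
Qed.

Section EvalInversion.
Variable o : nat -> option nat.

Lemma eval_comp_inv f g x z :
  eval o (cComp f g) x z -> exists y, eval o g x y /\ eval o f y z.
Proof. intro H; inversion H; subst; eauto. Qed.

Lemma eval_pair_inv f g x z : eval o (cPair f g) x z ->
  exists a b, z = pair a b /\ eval o f x a /\ eval o g x b.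
Proof. intro H; inversion H; subst; eauto. Qed.

Lemma eval_rec0_inv f g x y : eval o (cRec f g) (pair x 0) y -> eval o f x y.
Proof. intro H; inversion H; subst; inj_pairs; subst; auto. Qed.

Lemma eval_recS_inv f g x n y : eval o (cRec f g) (pair x (S n)) y ->
  exists r, eval o (cRec f g) (pair x n) r /\ eval o g (pair x (pair n r)) y.
Proof. intro H; inversion H; subst; inj_pairs; subst; eauto. Qed.

Lemma eval_mu_inv f x y : eval o (cMu f) x y ->
  eval o f (pair x y) 0 /\
  (forall z, z < y -> exists v, v <> 0 /\ eval o f (pair x z) v).
Proof. intro H; inversion H; subst; auto. Qed.

End EvalInversion.

Lemma eval_functional o c x y1 y2 : eval o c x y1 -> eval o c x y2 -> y1 = y2.
Proof.
  revert x y1 y2; induction c; intros x y1 y2 H1 H2;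
    try (inversion H1; inversion H2; subst; congruence).
  - apply eval_comp_inv in H1 as [a [A1 A2]], H2 as [b [B1 B2]].
    rewrite (IHc2 _ _ _ A1 B1) in A2; eauto.
  - apply eval_pair_inv in H1 as [a [b [-> [A1 A2]]]], H2 as [a' [b' [-> [B1 B2]]]].
    f_equal; eauto.
  - rewrite <- (pair_unpair x) in H1, H2.
    revert y1 y2 H1 H2; generalize (fst (unpair x)) as y; induction (snd (unpair x));
      intros y y1 y2 H1 H2.
    + apply eval_rec0_inv in H1, H2; eauto.
    + apply eval_recS_inv in H1 as [r [A1 A2]], H2 as [r' [B1 B2]].
      rewrite (IHn _ _ _ A1 B1) in A2; eauto.
  - apply eval_mu_inv in H1 as [A1 A2], H2 as [B1 B2].
    destruct (lt_eq_lt_dec y1 y2) as [[Hl|]|Hl]; auto; exfalso.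
    + destruct (B2 _ Hl) as [v [Hv Hv']]; apply Hv; eauto.
    + destruct (A2 _ Hl) as [v [Hv Hv']]; apply Hv; eauto.
Qed.

Lemma Phi_encode c o x v m : eval o c x v -> (Phi (encode c) o x m <-> m = v).
Proof.
  intro H; split.
  - intros [c' [E H']]; apply encode_inj in E; subst; eapply eval_functional; eauto.
  - intros ->; exists c; auto.
Qed.

Lemma join_tot (g h : nat -> nat) :
  join (tot g) (tot h) = tot (fun q => if Nat.odd q then h (Nat.div2 q) else g (Nat.div2 q)).
Proof.
  apply functional_extensionality; intro q; unfold join, tot; destruct (Nat.odd q); reflexivity.
Qed.

Lemma join_odd g h k : join g h (S (k + k)) = h k.
Proof.
  unfold join; replace (S (k + k)) with (2 * k + 1) by lia.
  rewrite Nat.odd_odd, Nat.div2_odd'; reflexivity.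
Qed.

Lemma join_even g h k : join g h (k + k) = g k.
Proof.
  unfold join; replace (k + k) with (2 * k) by lia.
  rewrite Nat.odd_even, Nat.div2_double; reflexivity.
Qed.

(** * Oracle-free primitive recursive codes *)

Fixpoint primrec (c : code) : bool :=
  match c with
  | cOra | cMu _ => false
  | cComp f g | cPair f g | cRec f g => primrec f && primrec g
  | _ => true
  end.

(* Values outside [primrec] codes are junk. *)
Fixpoint den (c : code) (x : nat) : nat :=
  match c with
  | cZero | cOra | cMu _ => 0
  | cSucc => S x
  | cId => x
  | cFst => fst (unpair x)
  | cSnd => snd (unpair x)
  | cComp f g => den f (den g x)
  | cPair f g => pair (den f x) (den g x)
  | cRec f g => let (y, n) := unpair x in
      nat_rect (fun _ => nat) (den f y) (fun m r => den g (pair y (pair m r))) n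
  end.

Ltac den_simpl := repeat progress (cbn [den fst snd]; rewrite ?unpair_pair).

Lemma eval_den o c x : primrec c = true -> eval o c x (den c x).
Proof.
  revert x; induction c; intros x Hp; cbn in Hp |- *; try discriminate;
    try (apply andb_prop in Hp as [Hp1 Hp2]); try (constructor; fail).
  - econstructor; eauto.
  - constructor; eauto.
  - rewrite <- (pair_unpair x), unpair_pair.
    generalize (fst (unpair x)) as y; induction (snd (unpair x)); intro y; cbn.
    + constructor; auto.
    + econstructor; eauto.
Qed.

Lemma eval_primrec o c x v : primrec c = true -> den c x = v -> eval o c x v.
Proof. intros Hp <-; apply eval_den, Hp. Qed.

Lemma eval_primrec_iff o c x y : primrec c = true -> eval o c x y <-> y = den c x.
Proof.
  intro Hp; split.
  - intro H; eapply eval_functional; eauto using eval_den.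
  - intros ->; apply eval_den, Hp.
Qed.

(** * Substituting a code for the oracle *)

Fixpoint subst_oracle (c D : code) : code :=
  match c with
  | cOra => D
  | cComp f g => cComp (subst_oracle f D) (subst_oracle g D)
  | cPair f g => cPair (subst_oracle f D) (subst_oracle g D)
  | cRec f g => cRec (subst_oracle f D) (subst_oracle g D)
  | cMu f => cMu (subst_oracle f D)
  | c => c
  end.

Lemma eval_subst_oracle o o' D : (forall q v, o' q = Some v <-> eval o D q v) ->
  forall c x y, eval o (subst_oracle c D) x y <-> eval o' c x y.
Proof.
  intros HD c; induction c; intros x y; cbn [subst_oracle];
    try (split; intro H; inversion H; subst; constructor; fail).
  - split; intro H; [constructor; apply HD; auto|inversion H; subst; apply HD; auto].
  - split; intro H; apply eval_comp_inv in H as [a [A1 A2]];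
      econstructor; [apply IHc2 | apply IHc1 | apply IHc2 | apply IHc1]; eauto.
  - split; intro H; apply eval_pair_inv in H as [a [b [-> [A1 A2]]]];
      constructor; [apply IHc1 | apply IHc2 | apply IHc1 | apply IHc2]; auto.
  - rewrite <- (pair_unpair x); revert y.
    generalize (fst (unpair x)) as y0; induction (snd (unpair x)); intros y0 y.
    + split; intro H; apply eval_rec0_inv in H; constructor; apply IHc1; auto.
    + split; intro H; apply eval_recS_inv in H as [r [A1 A2]];
        econstructor; [apply IHn | apply IHc2 | apply IHn | apply IHc2]; eauto.
  - split; intro H; apply eval_mu_inv in H as [A1 A2]; constructor;
      try apply IHc; auto; intros z Hz; destruct (A2 z Hz) as [v [Hv Hv']];
      exists v; split; auto; apply IHc; auto.
Qed.

Definition graph_oracle (o : nat -> option nat) (D : code) : nat -> option nat :=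
  fun z => match excluded_middle_informative (exists v, eval o D z v) with
           | left H => Some (proj1_sig (constructive_indefinite_description _ H))
           | right _ => None
           end.

Lemma graph_oracle_spec o D q v : graph_oracle o D q = Some v <-> eval o D q v.
Proof.
  unfold graph_oracle; destruct (excluded_middle_informative _) as [H|H].
  - destruct (constructive_indefinite_description _ H) as [w Hw]; cbn.
    split; [intro E; injection E as <-; auto | intro E; f_equal; eapply eval_functional; eauto].
  - split; [discriminate | intro E; exfalso; eauto].
Qed.

Lemma eval_subst_graph o D c x y :
  eval o (subst_oracle c D) x y <-> eval (graph_oracle o D) c x y.
Proof. apply eval_subst_oracle; intros; apply graph_oracle_spec. Qed.

Fixpoint const_code (n : nat) : code :=
  match n with 0 => cZero | S n => cComp cSucc (const_code n) end.

Lemma den_const_code n x : den (const_code n) x = n.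
Proof. induction n; cbn; auto. Qed.

Lemma primrec_const_code n : primrec (const_code n) = true.
Proof. induction n; cbn; auto. Qed.

Ltac solve_primrec := cbn [primrec]; rewrite ?primrec_const_code; reflexivity.

(* [cRec a _] runs on [(x, t x)], so the branch [b] is only reached after [a] converged at [x]. *)
Definition ifz (t a b : code) : code := cComp (cRec a (cComp b cFst)) (cPair cId t).

Lemma den_ifz t a b x :
  den (ifz t a b) x = match den t x with 0 => den a x | S _ => den b x end.
Proof.
  unfold ifz; cbn; rewrite unpair_pair.
  destruct (den t x); unpair_simpl; reflexivity.
Qed.

Lemma primrec_ifz t a b :
  primrec t = true -> primrec a = true -> primrec b = true -> primrec (ifz t a b) = true.
Proof. intros Ht Ha Hb; cbn; rewrite Ht, Ha, Hb; reflexivity. Qed.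

Lemma eval_ifz0 o t a b x y : primrec t = true -> den t x = 0 ->
  eval o (ifz t a b) x y <-> eval o a x y.
Proof.
  intros Hp Ht; unfold ifz; split; intro H.
  - apply eval_comp_inv in H as [q [H1 H2]]; apply eval_pair_inv in H1 as [u [v [-> [H1 H3]]]].
    inversion H1; subst; apply (eval_primrec_iff _ _ _ _ Hp) in H3; rewrite Ht in H3; subst.
    apply eval_rec0_inv in H2; auto.
  - econstructor; [constructor; [constructor | apply eval_den, Hp]|].
    rewrite Ht; constructor; auto.
Qed.

Lemma eval_ifzS o t a b x y k ya : primrec t = true -> den t x = S k -> eval o a x ya ->
  eval o (ifz t a b) x y <-> eval o b x y.
Proof.
  intros Hp Ht Ha; unfold ifz; split; intro H.
  - apply eval_comp_inv in H as [q [H1 H2]]; apply eval_pair_inv in H1 as [u [v [-> [H1 H3]]]].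
    inversion H1; subst; apply (eval_primrec_iff _ _ _ _ Hp) in H3; rewrite Ht in H3; subst.
    apply eval_recS_inv in H2 as [r [_ H2]]; apply eval_comp_inv in H2 as [w [H4 H5]].
    inversion H4; subst; rewrite unpair_pair in H5; auto.
  - econstructor; [constructor; [constructor | apply eval_den, Hp]|]; rewrite Ht.
    clear Ht; induction k.
    + econstructor; [constructor; exact Ha|].
      econstructor; [constructor|]; rewrite unpair_pair; exact H.
    + econstructor; [exact IHk|].
      econstructor; [constructor|]; rewrite unpair_pair; exact H.
Qed.

Definition pred_code : code := cComp (cRec cZero (cComp cFst cSnd)) (cPair cZero cId).

Lemma den_pred_code x : den pred_code x = pred x.
Proof. unfold pred_code; cbn; rewrite unpair_pair; destruct x; unpair_simpl; reflexivity. Qed.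

Arguments ifz : simpl never.
Arguments pred_code : simpl never.

Fixpoint switch (t : code) (cs : list code) (d : code) : code :=
  match cs with
  | [] => d
  | c :: cs => ifz t c (switch (cComp pred_code t) cs d)
  end.

Lemma den_switch t cs d x :
  den (switch t cs d) x = nth (den t x) (map (fun c => den c x) cs) (den d x).
Proof.
  revert t; induction cs; intro t; cbn [switch].
  - destruct (den t x); reflexivity.
  - rewrite den_ifz, IHcs; cbn; rewrite den_pred_code; destruct (den t x); reflexivity.
Qed.

Lemma primrec_switch t cs d : primrec t = true -> Forall (fun c => primrec c = true) cs ->
  primrec d = true -> primrec (switch t cs d) = true.
Proof.
  intros Ht Hcs Hd; revert t Ht; induction Hcs as [|c cs Hc Hcs IH]; intros t Ht; [exact Hd|].
  apply primrec_ifz; auto; apply IH; cbn; rewrite Ht; reflexivity.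
Qed.

Arguments switch : simpl never.

Definition double_code : code :=
  cComp (cRec cZero (cComp cSucc (cComp cSucc (cComp cSnd cSnd)))) (cPair cZero cId).

Lemma den_double_code q : den double_code q = q + q.
Proof.
  unfold double_code; cbn [den]; rewrite unpair_pair; cbn [fst snd].
  induction q; [reflexivity|]; cbn [nat_rect]; rewrite IHq; unpair_simpl; lia.
Qed.

Definition div2_odd_code : code :=
  let r := cComp cSnd cSnd in
  cComp (cRec (cPair cZero cZero)
    (ifz (cComp cSnd r) (cPair (cComp cFst r) (const_code 1))
                        (cPair (cComp cSucc (cComp cFst r)) (const_code 0))))
    (cPair cZero cId).

Lemma den_div2_odd_code q : den div2_odd_code q = pair (Nat.div2 q) (Nat.b2n (Nat.odd q)).
Proof.
  unfold div2_odd_code; cbn [den]; rewrite unpair_pair; cbn [nat_rect].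
  induction q; [reflexivity|]; cbn [nat_rect]; rewrite IHq.
  remember (S q) as sq eqn:Esq; rewrite den_ifz; unpair_simpl.
  pose proof (Nat.div2_odd q) as Hq.
  destruct (Nat.odd q); cbn [Nat.b2n] in Hq |- *; rewrite ?den_const_code.
  - replace sq with (2 * S (Nat.div2 q)) by lia; rewrite Nat.div2_double, Nat.odd_even; reflexivity.
  - replace sq with (2 * Nat.div2 q + 1) by lia; rewrite Nat.div2_odd', Nat.odd_odd; reflexivity.
Qed.

Definition div2_code : code := cComp cFst div2_odd_code.
Definition odd_code : code := cComp cSnd div2_odd_code.

Lemma den_div2_code q : den div2_code q = Nat.div2 q.
Proof. cbn [div2_code den]; rewrite den_div2_odd_code, unpair_pair; reflexivity. Qed.

Lemma den_odd_code q : den odd_code q = Nat.b2n (Nat.odd q).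
Proof. cbn [odd_code den]; rewrite den_div2_odd_code, unpair_pair; reflexivity. Qed.

(** * An abstract machine for [eval] *)

(* Lists are [0] (nil) and [S (pair h t)]; states and continuation frames are tagged pairs.
   [Val W e x] first checks that every number on the worklist [W] encodes a code, and gets
   stuck otherwise, since [Phi e] is empty when [e] encodes no code. Stuck states, such as the
   final [Ret v 0], are fixed points of [step]. *)
Definition cons_nat h t := S (pair h t).
Definition Val W e x := pair 0 (pair W (pair e x)).
Definition Ev e x K := pair 1 (pair e (pair x K)).
Definition Ret v K := pair 2 (pair v K).
Definition fComp f := pair 0 f.
Definition fPair1 g x := pair 1 (pair g x).
Definition fPair2 a := pair 2 a.
Definition fRec g y m := pair 3 (pair g (pair y m)).
Definition fMu f x i := pair 4 (pair f (pair x i)).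

Definition cons_code h t := cComp cSucc (cPair h t).
Definition hd_code l := cComp cFst (cComp pred_code l).
Definition tl_code l := cComp cSnd (cComp pred_code l).
Definition val_code W ex := cPair (const_code 0) (cPair W ex).
Definition ev_code e x K := cPair (const_code 1) (cPair e (cPair x K)).
Definition ret_code v K := cPair (const_code 2) (cPair v K).
Definition frame_code tag c := cPair (const_code tag) c.

Definition val_step : code :=
  let W := cComp cFst cSnd in
  let ex := cComp cSnd cSnd in
  let tag := cComp cFst (hd_code W) in
  let arg := cComp cSnd (hd_code W) in
  let leaf := ifz arg (val_code (tl_code W) ex) cId in
  let binary :=
    val_code (cons_code (cComp cFst arg) (cons_code (cComp cSnd arg) (tl_code W))) ex in
  let unary := val_code (cons_code arg (tl_code W)) ex in
  ifz W (ev_code (cComp cFst ex) (cComp cSnd ex) (const_code 0))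
    (switch tag [leaf; leaf; leaf; leaf; leaf; leaf; binary; binary; binary; unary] cId).

Definition ev_step : code :=
  let e := cComp cFst cSnd in
  let x := cComp cFst (cComp cSnd cSnd) in
  let K := cComp cSnd (cComp cSnd cSnd) in
  let arg := cComp cSnd e in
  let f := cComp cFst arg in
  let g := cComp cSnd arg in
  let y := cComp cFst x in
  let m := cComp pred_code (cComp cSnd x) in
  let x0 := cPair x (const_code 0) in
  switch (cComp cFst e) [
    ret_code (const_code 0) K;
    ret_code (cComp cSucc x) K;
    ret_code x K;
    ret_code (cComp cFst x) K;
    ret_code (cComp cSnd x) K;
    cId;
    ev_code g x (cons_code (frame_code 0 f) K);
    ev_code f x (cons_code (frame_code 1 (cPair g x)) K);
    ifz (cComp cSnd x) (ev_code f y K)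
      (ev_code e (cPair y m) (cons_code (frame_code 3 (cPair g (cPair y m))) K));
    ev_code arg x0 (cons_code (frame_code 4 (cPair arg x0)) K)
  ] cId.

Definition ret_step : code :=
  let v := cComp cFst cSnd in
  let K := cComp cSnd cSnd in
  let K' := tl_code K in
  let fr := cComp cSnd (hd_code K) in
  let f := cComp cFst fr in
  let x := cComp cFst (cComp cSnd fr) in
  let i := cComp cSnd (cComp cSnd fr) in
  let xi := cPair x (cComp cSucc i) in
  ifz K cId (switch (cComp cFst (hd_code K)) [
    ev_code fr v K';
    ev_code (cComp cFst fr) (cComp cSnd fr) (cons_code (frame_code 2 v) K');
    ret_code (cPair fr v) K';
    ev_code f (cPair x (cPair i v)) K';
    ifz v (ret_code i K') (ev_code f xi (cons_code (frame_code 4 (cPair f xi)) K'))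
  ] cId).

Definition step_code : code := switch cFst [val_step; ev_step; ret_step] cId.

(* Oracle queries are the states [Ev e x K] with [e] of tag 5, like [encode cOra]. *)
Definition query_test : code :=
  let query := switch (cComp cFst (cComp cFst cSnd)) [const_code 0; const_code 0;
    const_code 0; const_code 0; const_code 0; const_code 1] (const_code 0) in
  switch cFst [const_code 0; query; const_code 0] (const_code 0).
Definition query_arg : code := cComp cFst (cComp cSnd cSnd).
Definition query_cont : code := cComp cSnd (cComp cSnd cSnd).

Definition halt_test : code :=
  switch cFst [const_code 1; const_code 1;
    ifz (cComp cSnd cSnd) (const_code 0) (const_code 1)] (const_code 1).

Definition step (ans : nat -> nat) (s : nat) : nat :=
  match den query_test s with
  | 0 => den step_code s
  | S _ => Ret (ans (den query_arg s)) (den query_cont s)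
  end.

Ltac step_simpl :=
  unfold step, step_code, val_step, ev_step, ret_step, query_test, query_arg, query_cont,
    halt_test, val_code, ev_code, ret_code, frame_code, cons_code, hd_code, tl_code,
    Val, Ev, Ret, cons_nat, fComp, fPair1, fPair2, fRec, fMu;
  repeat progress (cbn; rewrite ?den_ifz, ?den_switch, ?den_pred_code, ?den_const_code,
    ?unpair_pair).

Section Steps.
Variable ans : nat -> nat.

Ltac solve_step := intros; step_simpl; reflexivity.

Lemma step_zero x K : step ans (Ev (encode cZero) x K) = Ret 0 K. Proof. solve_step. Qed.
Lemma step_succ x K : step ans (Ev (encode cSucc) x K) = Ret (S x) K. Proof. solve_step. Qed.
Lemma step_id x K : step ans (Ev (encode cId) x K) = Ret x K. Proof. solve_step. Qed.
Lemma step_fst x K : step ans (Ev (encode cFst) x K) = Ret (fst (unpair x)) K.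
Proof. solve_step. Qed.
Lemma step_snd x K : step ans (Ev (encode cSnd) x K) = Ret (snd (unpair x)) K.
Proof. solve_step. Qed.
Lemma step_ora x K : step ans (Ev (encode cOra) x K) = Ret (ans x) K. Proof. solve_step. Qed.
Lemma step_comp f g x K :
  step ans (Ev (encode (cComp f g)) x K) = Ev (encode g) x (cons_nat (fComp (encode f)) K).
Proof. solve_step. Qed.
Lemma step_pair f g x K :
  step ans (Ev (encode (cPair f g)) x K) = Ev (encode f) x (cons_nat (fPair1 (encode g) x) K).
Proof. solve_step. Qed.
Lemma step_rec0 f g y K : step ans (Ev (encode (cRec f g)) (pair y 0) K) = Ev (encode f) y K.
Proof. solve_step. Qed.
Lemma step_recS f g y m K : step ans (Ev (encode (cRec f g)) (pair y (S m)) K) =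
  Ev (encode (cRec f g)) (pair y m) (cons_nat (fRec (encode g) y m) K).
Proof. solve_step. Qed.
Lemma step_mu f x K : step ans (Ev (encode (cMu f)) x K) =
  Ev (encode f) (pair x 0) (cons_nat (fMu (encode f) x 0) K).
Proof. solve_step. Qed.

Lemma step_halted v : step ans (Ret v 0) = Ret v 0. Proof. solve_step. Qed.
Lemma step_ret_comp v f K : step ans (Ret v (cons_nat (fComp f) K)) = Ev f v K.
Proof. solve_step. Qed.
Lemma step_ret_pair1 a g x K :
  step ans (Ret a (cons_nat (fPair1 g x) K)) = Ev g x (cons_nat (fPair2 a) K).
Proof. solve_step. Qed.
Lemma step_ret_pair2 a b K : step ans (Ret b (cons_nat (fPair2 a) K)) = Ret (pair a b) K.
Proof. solve_step. Qed.
Lemma step_ret_rec r g y m K :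
  step ans (Ret r (cons_nat (fRec g y m) K)) = Ev g (pair y (pair m r)) K.
Proof. solve_step. Qed.
Lemma step_ret_mu0 f x i K : step ans (Ret 0 (cons_nat (fMu f x i) K)) = Ret i K.
Proof. solve_step. Qed.
Lemma step_ret_muS v f x i K : step ans (Ret (S v) (cons_nat (fMu f x i) K)) =
  Ev f (pair x (S i)) (cons_nat (fMu f x (S i)) K).
Proof. solve_step. Qed.

Lemma step_val_nil e x : step ans (Val 0 e x) = Ev e x 0. Proof. solve_step. Qed.
Lemma step_val_leaf tg t e x :
  tg <= 5 -> step ans (Val (cons_nat (pair tg 0) t) e x) = Val t e x.
Proof. intro H; do 6 (destruct tg as [|tg]; [solve_step|]); lia. Qed.
Lemma step_val_leaf_stuck tg ar t e x : tg <= 5 ->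
  step ans (Val (cons_nat (pair tg (S ar)) t) e x) = Val (cons_nat (pair tg (S ar)) t) e x.
Proof. intro H; do 6 (destruct tg as [|tg]; [solve_step|]); lia. Qed.
Lemma step_val_binary tg f g t e x : 6 <= tg <= 8 ->
  step ans (Val (cons_nat (pair tg (pair f g)) t) e x) = Val (cons_nat f (cons_nat g t)) e x.
Proof.
  intro H; do 6 (destruct tg as [|tg]; [lia|]).
  do 3 (destruct tg as [|tg]; [solve_step|]); lia.
Qed.
Lemma step_val_mu f t e x : step ans (Val (cons_nat (pair 9 f) t) e x) = Val (cons_nat f t) e x.
Proof. solve_step. Qed.
Lemma step_val_stuck tg ar t e x : 9 < tg ->
  step ans (Val (cons_nat (pair tg ar) t) e x) = Val (cons_nat (pair tg ar) t) e x.
Proof. intro H; do 10 (destruct tg as [|tg]; [lia|]); step_simpl; destruct tg; reflexivity. Qed.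

End Steps.

Lemma halt_test_spec s : den halt_test s = 0 <-> exists v, s = Ret v 0.
Proof.
  rewrite <- (pair_unpair s), <- (pair_unpair (snd (unpair s))).
  generalize (fst (unpair s)) as ph, (fst (unpair (snd (unpair s)))) as v,
    (snd (unpair (snd (unpair s)))) as K; intros ph v K.
  step_simpl; split.
  - destruct ph as [|[|[|ph]]]; cbn; try discriminate.
    + destruct K; cbn; [eauto | discriminate].
    + destruct ph; discriminate.
  - intros [w E]; inj_pairs; subst; reflexivity.
Qed.

Section Machine.
Variable ans : nat -> nat.
Local Notation run n s := (Nat.iter n (step ans) s).

Definition reach s t := exists n, run n s = t.

Lemma reach_refl s : reach s s.
Proof. exists 0; reflexivity. Qed.

Lemma reach_step s t : reach (step ans s) t -> reach s t.
Proof. intros [n H]; exists (S n); rewrite Nat.iter_succ_r; auto. Qed.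

Lemma reach_trans s t u : reach s t -> reach t u -> reach s u.
Proof. intros [n H] [m H']; exists (m + n); rewrite Nat.iter_add; congruence. Qed.

Lemma run_fixed n s : step ans s = s -> run n s = s.
Proof.
  intro H; induction n; [reflexivity|].
  change (step ans (run n s) = s); rewrite IHn; exact H.
Qed.

Lemma run_halted n v : run n (Ret v 0) = Ret v 0.
Proof. apply run_fixed, step_halted. Qed.

Lemma Ev_not_halted e x K y : Ev e x K <> Ret y 0.
Proof. unfold Ev, Ret; intro H; inj_pairs. Qed.

Lemma Val_not_halted W e x y : Val W e x <> Ret y 0.
Proof. unfold Val, Ret; intro H; inj_pairs. Qed.

Lemma Ret_cons_not_halted v h K y : Ret v (cons_nat h K) <> Ret y 0.
Proof. unfold cons_nat, Ret; intro H; inj_pairs. Qed.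

Ltac step_to lem := apply reach_step; rewrite lem.

Lemma eval_reach c x y : eval (tot ans) c x y ->
  forall K, reach (Ev (encode c) x K) (Ret y K).
Proof.
  revert x y; induction c; intros x y H K.
  1-5: inversion H; subst; apply reach_step; cbn [encode];
    rewrite ?step_zero, ?step_succ, ?step_id, ?step_fst, ?step_snd; apply reach_refl.
  - inversion H as [| | | | | ? ? Hv | | | | | ]; injection Hv as <-.
    step_to step_ora; apply reach_refl.
  - apply eval_comp_inv in H as [a [A1 A2]].
    step_to step_comp; eapply reach_trans; [apply IHc2; eauto|].
    step_to step_ret_comp; apply IHc1; auto.
  - apply eval_pair_inv in H as [a [b [-> [A1 A2]]]].
    step_to step_pair; eapply reach_trans; [apply IHc1; eauto|].
    step_to step_ret_pair1; eapply reach_trans; [apply IHc2; eauto|].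
    step_to step_ret_pair2; apply reach_refl.
  - rewrite <- (pair_unpair x) in H |- *; revert y K H.
    generalize (fst (unpair x)) as y0; induction (snd (unpair x)); intros y0 y K H.
    + apply eval_rec0_inv in H; step_to step_rec0; apply IHc1; auto.
    + apply eval_recS_inv in H as [r [A1 A2]].
      step_to step_recS; eapply reach_trans; [apply IHn; eauto|].
      step_to step_ret_rec; apply IHc2; auto.
  - apply eval_mu_inv in H as [A1 A2]; step_to step_mu.
    assert (search : forall d i, i + d = y ->
      reach (Ev (encode c) (pair x i) (cons_nat (fMu (encode c) x i) K)) (Ret y K)).
    { induction d; intros i Hi.
      - replace i with y by lia; eapply reach_trans; [apply IHc; eauto|].
        step_to step_ret_mu0; apply reach_refl.
      - destruct (A2 i ltac:(lia)) as [[|v] [Hv Hv']]; [congruence|].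
        eapply reach_trans; [apply IHc; eauto|].
        step_to step_ret_muS; apply IHd; lia. }
    apply (search y 0); lia.
Qed.

Lemma val_reach c W e x : reach (Val W e x) (Ev e x 0) ->
  reach (Val (cons_nat (encode c) W) e x) (Ev e x 0).
Proof.
  revert W; induction c; intros W H; cbn [encode];
    try (step_to step_val_leaf; [exact H | lia]).
  1-3: step_to step_val_binary; [apply IHc1, IHc2, H | lia].
  step_to step_val_mu; apply IHc, H.
Qed.

Inductive code_list : nat -> Prop :=
| code_list_nil : code_list 0
| code_list_cons c t : code_list t -> code_list (cons_nat (encode c) t).

Lemma code_list_cons_inv h t : code_list (cons_nat h t) -> exists c, h = encode c /\ code_list t.
Proof. intro H; inversion H as [|c t' Ht E]; unfold cons_nat in E; inj_pairs; subst; eauto. Qed.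

Lemma run_halts_inv n s y : run n s = Ret y 0 -> s <> Ret y 0 ->
  exists n', n = S n' /\ run n' (step ans s) = Ret y 0.
Proof.
  intros H Hs; destruct n as [|n]; [cbn in H; congruence|].
  exists n; split; auto; rewrite <- Nat.iter_succ_r; auto.
Qed.

Lemma stuck_not_halts n s y : step ans s = s -> s <> Ret y 0 -> run n s <> Ret y 0.
Proof. intros H1 H2; rewrite run_fixed; auto. Qed.

Lemma val_halts_inv n W e x y : run n (Val W e x) = Ret y 0 ->
  code_list W /\ exists m, m <= n /\ run m (Ev e x 0) = Ret y 0.
Proof.
  revert W; induction n as [n IH] using lt_wf_ind; intros W H.
  destruct (run_halts_inv _ _ _ H (Val_not_halted _ _ _ _)) as [n' [-> H']].
  destruct W as [|p].
  { rewrite step_val_nil in H'; split; [constructor | exists n'; auto]. }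
  replace (S p) with (cons_nat (pair (fst (unpair (fst (unpair p))))
    (snd (unpair (fst (unpair p))))) (snd (unpair p))) in H' |- *
    by (unfold cons_nat; rewrite !pair_unpair; reflexivity).
  generalize dependent (snd (unpair p)); generalize (snd (unpair (fst (unpair p)))) as ar;
    generalize (fst (unpair (fst (unpair p)))) as tg; intros tg ar t H'.
  assert (tail : forall W', run n' (Val W' e x) = Ret y 0 ->
    code_list W' /\ exists m, m <= S n' /\ run m (Ev e x 0) = Ret y 0).
  { intros W' HW; destruct (IH n' ltac:(lia) _ HW) as [HW' [m [Hm Hm']]].
    split; [exact HW' | exists m; split; [lia | exact Hm']]. }
  destruct (le_lt_dec tg 5) as [Hle|Hgt]; [destruct ar as [|ar]|].
  - rewrite step_val_leaf in H' by exact Hle.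
    destruct (tail _ H') as [Ht Hrun]; split; [|exact Hrun].
    destruct tg as [|[|[|[|[|[|tg]]]]]]; try lia;
      [apply (code_list_cons cZero) | apply (code_list_cons cSucc) | apply (code_list_cons cId)
      | apply (code_list_cons cFst) | apply (code_list_cons cSnd) | apply (code_list_cons cOra)];
      exact Ht.
  - exfalso; rewrite step_val_leaf_stuck in H' by exact Hle.
    exact (stuck_not_halts _ _ _ (step_val_leaf_stuck _ _ _ _ _ _ Hle)
      (Val_not_halted _ _ _ _) H').
  - destruct (le_lt_dec tg 9) as [Hle9|Hgt9].
    2: { exfalso; rewrite step_val_stuck in H' by exact Hgt9.
      exact (stuck_not_halts _ _ _ (step_val_stuck _ _ _ _ _ _ Hgt9)
        (Val_not_halted _ _ _ _) H'). }
    destruct (Nat.eq_dec tg 9) as [->|Hne].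
    + rewrite step_val_mu in H'; destruct (tail _ H') as [Ht Hrun]; split; [|exact Hrun].
      apply code_list_cons_inv in Ht as [f [-> Ht]]; exact (code_list_cons (cMu f) _ Ht).
    + rewrite <- (pair_unpair ar) in H' |- *; rewrite step_val_binary in H' by lia.
      destruct (tail _ H') as [Ht Hrun]; split; [|exact Hrun].
      apply code_list_cons_inv in Ht as [f [-> Ht]]; apply code_list_cons_inv in Ht as [g [-> Ht]].
      assert (Htg : tg = 6 \/ tg = 7 \/ tg = 8) by lia; destruct Htg as [-> | [-> | ->]];
        [exact (code_list_cons (cComp f g) _ Ht) | exact (code_list_cons (cPair f g) _ Ht)
        | exact (code_list_cons (cRec f g) _ Ht)].
Qed.

Definition returns_within (k : nat) (c : code) (x K y : nat) : Prop :=
  exists w m, m < k /\ eval (tot ans) c x w /\ run m (Ret w K) = Ret y 0.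

Lemma mu_search_halts_inv n c x K y :
  (forall k x' K' y', k < n -> run k (Ev (encode c) x' K') = Ret y' 0 ->
    returns_within k c x' K' y') ->
  forall k i, k < n ->
  (forall z, z < i -> exists v, v <> 0 /\ eval (tot ans) c (pair x z) v) ->
  run k (Ev (encode c) (pair x i) (cons_nat (fMu (encode c) x i) K)) = Ret y 0 ->
  returns_within k (cMu c) x K y.
Proof.
  intros IH k; induction k as [k IHk] using lt_wf_ind; intros i Hk Hbelow Hrun.
  destruct (IH _ _ _ _ Hk Hrun) as [v [m [Hm [Hv Hret]]]].
  destruct (run_halts_inv _ _ _ Hret (Ret_cons_not_halted _ _ _ _)) as [m' [-> Hret']].
  destruct v as [|v].
  - rewrite step_ret_mu0 in Hret'; exists i, m'; repeat split; [lia | constructor; auto | auto].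
  - rewrite step_ret_muS in Hret'.
    destruct (IHk m' ltac:(lia) (S i) ltac:(lia)) as [w [m'' [Hm'' [Hw Hret'']]]]; auto.
    + intros z Hz; destruct (Nat.eq_dec z i) as [->|]; [exists (S v); auto | apply Hbelow; lia].
    + exists w, m''; repeat split; auto; lia.
Qed.

Lemma ev_halts_inv n c x K y : run n (Ev (encode c) x K) = Ret y 0 -> returns_within n c x K y.
Proof.
  revert c x K y; induction n as [n IH] using lt_wf_ind; intros c x K y H.
  destruct (run_halts_inv _ _ _ H (Ev_not_halted _ _ _ _)) as [n' [-> H']].
  assert (frame : forall c' x' h K', run n' (Ev (encode c') x' (cons_nat h K')) = Ret y 0 ->
    exists w m, m < n' /\ eval (tot ans) c' x' w /\
      run m (step ans (Ret w (cons_nat h K'))) = Ret y 0).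
  { intros c' x' h K' Hrun.
    destruct (IH n' ltac:(lia) _ _ _ _ Hrun) as [w [m [Hm [Hw Hret]]]].
    destruct (run_halts_inv _ _ _ Hret (Ret_cons_not_halted _ _ _ _)) as [m' [-> Hret']].
    exists w, m'; repeat split; auto; lia. }
  destruct c.
  1-6: rewrite ?step_zero, ?step_succ, ?step_id, ?step_fst, ?step_snd, ?step_ora in H';
    eexists _, n'; repeat split; eauto; constructor; reflexivity.
  - rewrite step_comp in H'; destruct (frame _ _ _ _ H') as [a [m1 [Hm1 [Ha Hrun]]]].
    rewrite step_ret_comp in Hrun.
    destruct (IH m1 ltac:(lia) _ _ _ _ Hrun) as [b [m2 [Hm2 [Hb Hret]]]].
    exists b, m2; repeat split; [lia | econstructor; eauto | auto].
  - rewrite step_pair in H'; destruct (frame _ _ _ _ H') as [a [m1 [Hm1 [Ha Hrun]]]].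
    rewrite step_ret_pair1 in Hrun.
    destruct (IH m1 ltac:(lia) _ _ _ _ Hrun) as [b [m2 [Hm2 [Hb Hret]]]].
    destruct (run_halts_inv _ _ _ Hret (Ret_cons_not_halted _ _ _ _)) as [m2' [-> Hret']].
    rewrite step_ret_pair2 in Hret'.
    exists (pair a b), m2'; repeat split; [lia | constructor; auto | auto].
  - rewrite <- (pair_unpair x) in H' |- *; destruct (snd (unpair x)) as [|j].
    + rewrite step_rec0 in H'; destruct (IH n' ltac:(lia) _ _ _ _ H') as [a [m [Hm [Ha Hret]]]].
      exists a, m; repeat split; [lia | constructor; auto | auto].
    + rewrite step_recS in H'; destruct (frame _ _ _ _ H') as [r [m1 [Hm1 [Hr Hrun]]]].
      rewrite step_ret_rec in Hrun.
      destruct (IH m1 ltac:(lia) _ _ _ _ Hrun) as [a [m2 [Hm2 [Ha Hret]]]].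
      exists a, m2; repeat split; [lia | econstructor; eauto | auto].
  - rewrite step_mu in H'.
    destruct (mu_search_halts_inv (S n') c x K y (fun k x' K' y' Hk => IH k Hk c x' K' y')
      n' 0 ltac:(lia) ltac:(intros; lia) H') as [w [m [Hm [Hw Hret]]]].
    exists w, m; repeat split; auto; lia.
Qed.

Definition init_state (e x : nat) : nat := Val (cons_nat e 0) e x.

Lemma Phi_iff_halts e x y :
  Phi e (tot ans) x y <-> exists n, run n (init_state e x) = Ret y 0.
Proof.
  split.
  - intros [c [<- Hc]].
    assert (Hval : reach (init_state (encode c) x) (Ev (encode c) x 0)).
    { apply (val_reach c 0), reach_step; rewrite step_val_nil; apply reach_refl. }
    exact (reach_trans _ _ _ Hval (eval_reach _ _ _ Hc 0)).
  - intros [n Hn]; apply val_halts_inv in Hn as [Hcodes [m [_ Hm]]].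
    apply code_list_cons_inv in Hcodes as [c [-> _]].
    destruct (ev_halts_inv _ _ _ _ _ Hm) as [w [m' [_ [Hw Hret]]]].
    rewrite run_halted in Hret; unfold Ret in Hret; inj_pairs; subst.
    exists c; auto.
Qed.

End Machine.

(** * A universal code *)

(* [run_code] runs on [pair inp n] with [inp = pair a (pair e x)]; its step function sees
   [pair inp (pair n r)] with [r] the current state, and answers a query [q] by the oracle at
   [pair a q]. *)
Definition init_code : code :=
  let e := cComp cFst cSnd in
  cPair (const_code 0) (cPair (cons_code e (const_code 0)) (cPair e (cComp cSnd cSnd))).

Definition step_oracle_code : code :=
  let r := cComp cSnd cSnd in
  let query := ret_code (cComp cOra (cPair (cComp cFst cFst) (cComp query_arg r)))
    (cComp query_cont r) in
  ifz (cComp query_test r) (cComp step_code r) query.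

Definition run_code : code := cRec init_code step_oracle_code.
Definition halt_code : code := cComp halt_test run_code.
Definition output_code : code := cComp (cComp cFst cSnd) run_code.
Definition universal : code := cComp output_code (cPair cId (cMu halt_code)).

Section Universal.
Variables (o : nat -> option nat) (ans : nat -> nat) (a : nat).
Hypothesis oracle_ans : forall q, o (pair a q) = Some (ans q).

Lemma eval_step_oracle_code b n r :
  eval o step_oracle_code (pair (pair a b) (pair n r)) (step ans r).
Proof.
  unfold step_oracle_code, step.
  destruct (den query_test r) as [|k] eqn:Hq.
  - apply eval_ifz0; [reflexivity | den_simpl; exact Hq |].
    apply eval_primrec; [reflexivity | den_simpl; reflexivity].
  - rewrite (eval_ifzS _ _ _ _ _ _ k (den step_code r)); [| reflexivity
      | den_simpl; exact Hq
      | apply eval_primrec; [reflexivity | den_simpl; reflexivity]].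
    unfold ret_code, Ret; constructor; [apply eval_den, primrec_const_code|].
    constructor.
    + econstructor; [| constructor; apply oracle_ans].
      apply eval_primrec; [reflexivity | unpair_simpl; reflexivity].
    + apply eval_primrec; [reflexivity | unpair_simpl; reflexivity].
Qed.

Lemma eval_run_code e x n :
  eval o run_code (pair (pair a (pair e x)) n) (Nat.iter n (step ans) (init_state e x)).
Proof.
  induction n.
  - constructor; apply eval_primrec; [reflexivity | unpair_simpl; reflexivity].
  - econstructor; [exact IHn | apply eval_step_oracle_code].
Qed.

Lemma eval_halt_code e x n :
  eval o halt_code (pair (pair a (pair e x)) n)
    (den halt_test (Nat.iter n (step ans) (init_state e x))).
Proof. econstructor; [apply eval_run_code | apply eval_den; reflexivity]. Qed.

Lemma eval_output_code e x n :
  eval o output_code (pair (pair a (pair e x)) n)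
    (fst (unpair (snd (unpair (Nat.iter n (step ans) (init_state e x)))))).
Proof. econstructor; [apply eval_run_code | apply eval_den; reflexivity]. Qed.

Theorem eval_universal e x y : eval o universal (pair a (pair e x)) y <-> Phi e (tot ans) x y.
Proof.
  rewrite Phi_iff_halts; set (inp := pair a (pair e x)).
  set (halted := fun n => den halt_test (Nat.iter n (step ans) (init_state e x)) = 0).
  assert (output : forall n v, Nat.iter n (step ans) (init_state e x) = Ret v 0 ->
    eval o output_code (pair inp n) v).
  { intros n v Hv; generalize (eval_output_code e x n); rewrite Hv; unfold Ret.
    den_simpl; exact id. }
  split.
  - intro H; apply eval_comp_inv in H as [q [H1 H2]].
    apply eval_pair_inv in H1 as [i [n [-> [Hi Hn]]]]; inversion Hi; subst i.
    apply eval_mu_inv in Hn as [Hn _].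
    pose proof (eval_functional _ _ _ _ _ Hn (eval_halt_code e x n)) as Hh.
    symmetry in Hh; apply halt_test_spec in Hh as [v Hv].
    rewrite (eval_functional _ _ _ _ _ H2 (output _ _ Hv)); eauto.
  - intros [N HN].
    destruct (dec_inh_nat_subset_has_unique_least_element halted) as [n [[Hn Hleast] _]].
    { intro n; apply Nat.eq_decidable. }
    { exists N; apply halt_test_spec; eauto. }
    destruct (proj1 (halt_test_spec _) Hn) as [v Hv].
    assert (v = y) as <-.
    { assert (Hle : n <= N) by (apply Hleast, halt_test_spec; eauto).
      replace N with ((N - n) + n) in HN by lia.
      rewrite Nat.iter_add, Hv, run_halted in HN; unfold Ret in HN; inj_pairs; auto. }
    econstructor; [constructor; [constructor | constructor] | apply output, Hv].
    + rewrite <- Hn; apply eval_halt_code.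
    + intros z Hz; eexists; split; [| apply eval_halt_code].
      intro Hz0; specialize (Hleast z Hz0); lia.
Qed.

End Universal.

(* [D] computes the oracle from the parameter [a] carried along in the input. *)
Definition univ (D : code) : code := subst_oracle universal D.

Lemma eval_univ o D a ans : (forall q, eval o D (pair a q) (ans q)) ->
  forall e x y, eval o (univ D) (pair a (pair e x)) y <-> Phi e (tot ans) x y.
Proof.
  intros HD e x y; unfold univ; rewrite eval_subst_graph.
  apply eval_universal; intro q; apply graph_oracle_spec, HD.
Qed.

(** * Uniform computations in [K2^Y] *)

Definition join_code (ch cg : code) : code :=
  ifz (cComp odd_code cSnd) (cComp ch (cComp div2_code cSnd))
    (cComp cg (cPair cFst (cComp div2_code cSnd))).

Lemma eval_join_code o ch cg (h g : nat -> nat) a :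
  (forall x, eval o ch x (h x)) -> (forall x, eval o cg (pair a x) (g x)) ->
  forall q, eval o (join_code ch cg) (pair a q)
    (if Nat.odd q then g (Nat.div2 q) else h (Nat.div2 q)).
Proof.
  intros Hh Hg q; unfold join_code.
  assert (Hp : primrec (cComp odd_code cSnd) = true) by reflexivity.
  assert (Hodd : den (cComp odd_code cSnd) (pair a q) = Nat.b2n (Nat.odd q))
    by (den_simpl; apply den_odd_code).
  assert (Heven : eval o (cComp ch (cComp div2_code cSnd)) (pair a q) (h (Nat.div2 q))).
  { econstructor; [apply eval_primrec; [reflexivity | den_simpl; apply den_div2_code] | apply Hh]. }
  destruct (Nat.odd q).
  - rewrite (eval_ifzS _ _ _ _ _ _ 0 _ Hp Hodd Heven).
    econstructor; [| apply Hg].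
    apply eval_primrec; [reflexivity | den_simpl; rewrite den_div2_code; reflexivity].
  - rewrite (eval_ifz0 _ _ _ _ _ _ Hp Hodd); exact Heven.
Qed.

Lemma eval_univ_K2app o ch cg h g k a :
  (forall x, eval o ch x (h x)) -> (forall x, eval o cg (pair a x) (g x)) -> K2app h g k ->
  forall x, eval o (univ (join_code ch cg)) (pair a (pair (h 0) x)) (k x).
Proof.
  intros Hh Hg Hk x; apply (eval_univ _ _ _ _ (eval_join_code _ _ _ _ _ _ Hh Hg)).
  rewrite <- join_tot; apply Hk.
Qed.

Definition univ_chi : code := univ (cComp cOra cSnd).

Lemma eval_univ_chi Y a e x y :
  eval (chi Y) univ_chi (pair a (pair e x)) y <-> Phi e (chi Y) x y.
Proof.
  apply (eval_univ _ _ _ (fun n => if Y n then 1 else 0)); intro q.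
  econstructor; [apply eval_primrec; [reflexivity | den_simpl; reflexivity] |].
  constructor; reflexivity.
Qed.

Lemma computable_in_code Y g : computable_in Y g -> exists c, forall x, eval (chi Y) c x (g x).
Proof.
  intros [e He]; destruct (He 0) as [c [<- _]]; exists c; intro x.
  destruct (He x) as [c' [E H]]; apply encode_inj in E; subst; exact H.
Qed.

Definition uniformly_computable_in (Y : nat -> bool) (g : nat -> nat -> nat) : Prop :=
  exists c, forall n x, eval (chi Y) c (pair n x) (g n x).

Lemma K2app_uniformly_computable Y h g r : computable_in Y h -> uniformly_computable_in Y g ->
  (forall n, K2app h (g n) (r n)) -> uniformly_computable_in Y r.
Proof.
  intros [ch Hh]%computable_in_code [cg Hg] Hr.
  exists (cComp (univ (join_code ch cg)) (cPair cFst (cPair (const_code (h 0)) cSnd))).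
  intros n x; econstructor; [| apply (eval_univ_K2app _ _ _ _ _ _ n Hh (Hg n) (Hr n))].
  apply eval_primrec; [solve_primrec | den_simpl].
  rewrite den_const_code; reflexivity.
Qed.

(* On input [(w, (n, x))], with [w] the number of this very code, compute [g n x]: the
   oracle [g (n-1)] of the [K2] application is obtained by rerunning code [w] at [n-1]. *)
Definition iterate_code (cs cg0 : code) (s0 : nat) : code :=
  let n := cComp cFst cSnd in
  let x := cComp cSnd cSnd in
  let rerun := cComp univ_chi (cPair (const_code 0)
    (cPair (cComp cFst cFst) (cPair (cComp cFst cFst) (cPair (cComp cSnd cFst) cSnd)))) in
  ifz n (cComp cg0 x)
    (cComp (univ (join_code cs rerun))
       (cPair (cPair cFst (cComp pred_code n)) (cPair (const_code s0) x))).

Section Iterate.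
Variables (Y : nat -> bool) (s : nat -> nat) (g : nat -> nat -> nat) (cs cg0 : code).
Hypothesis eval_cs : forall x, eval (chi Y) cs x (s x).
Hypothesis eval_cg0 : forall x, eval (chi Y) cg0 x (g 0 x).
Hypothesis g_succ : forall n, K2app s (g n) (g (S n)).

Let w := encode (iterate_code cs cg0 (s 0)).

Lemma eval_iterate_code n x : eval (chi Y) (iterate_code cs cg0 (s 0)) (pair w (pair n x)) (g n x).
Proof.
  revert x; induction n as [|n IHn]; intro x; unfold iterate_code.
  - rewrite eval_ifz0; [| reflexivity | den_simpl; reflexivity].
    econstructor; [apply eval_primrec; [reflexivity | den_simpl; reflexivity] | apply eval_cg0].
  - rewrite (eval_ifzS _ _ _ _ _ _ n (g 0 x)); [| reflexivity | den_simpl; reflexivity |].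
    2: { econstructor; [| apply eval_cg0].
      apply eval_primrec; [reflexivity | den_simpl; reflexivity]. }
    econstructor.
    + apply eval_primrec; [solve_primrec | den_simpl].
      rewrite den_pred_code, den_const_code; reflexivity.
    + apply (eval_univ_K2app _ _ _ _ (g n) _ (pair w n) eval_cs); [| apply g_succ].
      intro y; econstructor; [apply eval_primrec; [reflexivity | den_simpl; reflexivity] |].
      apply eval_univ_chi, Phi_encode with (v := g n y); [apply IHn | reflexivity].
Qed.

End Iterate.

Lemma K2app_iterate_uniformly_computable Y s g : computable_in Y s -> computable_in Y (g 0) ->
  (forall n, K2app s (g n) (g (S n))) -> uniformly_computable_in Y g.
Proof.
  intros [cs Hs]%computable_in_code [cg0 Hg0]%computable_in_code Hsucc.
  set (c := iterate_code cs cg0 (s 0)).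
  exists (cComp c (cPair (const_code (encode c)) cId)); intros n x.
  econstructor; [| apply eval_iterate_code; assumption].
  apply eval_primrec; [solve_primrec | den_simpl].
  rewrite den_const_code; reflexivity.
Qed.

Definition eq_code (v : nat) : code :=
  switch cId (repeat (const_code 0) v ++ [const_code 1]) (const_code 0).

Lemma primrec_eq_code v : primrec (eq_code v) = true.
Proof.
  apply primrec_switch; [reflexivity | | apply primrec_const_code].
  apply Forall_app; split; [apply Forall_forall; intros c Hc; apply repeat_spec in Hc; subst|];
    repeat constructor.
Qed.

Lemma den_eq_code v r : den (eq_code v) r = if r =? v then 1 else 0.
Proof.
  unfold eq_code; rewrite den_switch, map_app, map_repeat; cbn.
  revert r; induction v; intros [|r]; cbn; auto; destruct r; reflexivity.
Qed.

Lemma turing_le_of_eq_test Y (A : nat -> Prop) r p v : uniformly_computable_in Y r ->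
  (forall n, A n <-> r n p = v) -> turing_le A Y.
Proof.
  intros [c Hc] HA.
  set (test := cComp (eq_code v) (cComp c (cPair cId (const_code p)))).
  assert (Htest : forall n, eval (chi Y) test n (if r n p =? v then 1 else 0)).
  { intro n; econstructor; [econstructor; [| apply Hc] |].
    - apply eval_primrec; [solve_primrec | den_simpl].
      rewrite den_const_code; reflexivity.
    - apply eval_primrec; [apply primrec_eq_code | apply den_eq_code]. }
  exists (encode test); intro n; rewrite !(Phi_encode _ _ _ _ _ (Htest n)), HA.
  destruct (Nat.eqb_spec (r n p) v); split; intro; congruence.
Qed.

(** * Elements of [B^X] *)

Definition const_fun (n : nat) : nat -> option nat := fun _ => Some n.

Lemma Bapp_code g h k c : g 0 = Some (encode c) ->
  (forall n m, k n = Some m <-> eval (join g h) c n m) -> Bapp g h k.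
Proof.
  intros Hg Hk n m; rewrite Hk, Hg; split.
  - intro H; exists (encode c); split; [reflexivity | exists c; auto].
  - intros [e [E [c' [Ec H]]]]; injection E as <-; apply encode_inj in Ec; subst; exact H.
Qed.

(* On the oracle [g (+) h] this computes [S (h x)], via the query [2x+1]. *)
Definition succ_code : code := cComp cSucc (cComp cOra (cComp cSucc double_code)).

Lemma Bapp_succ n : Bapp (const_fun (encode succ_code)) (const_fun n) (const_fun (S n)).
Proof.
  apply Bapp_code with succ_code; [reflexivity|]; intros k m.
  assert (Hs : eval (join (const_fun (encode succ_code)) (const_fun n)) succ_code k (S n)).
  { econstructor; [econstructor |constructor].
    - apply eval_primrec; [reflexivity | cbn [den]; rewrite den_double_code; reflexivity].
    - constructor; rewrite join_odd; reflexivity. }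
  split; [intro E; injection E as <-; exact Hs |].
  intro H; rewrite (eval_functional _ _ _ _ _ H Hs); reflexivity.
Qed.

Section Jump.
Variable X : nat -> bool.

Lemma partial_computable_const n : partial_computable_in X (const_fun n).
Proof.
  exists (encode (const_code n)); intros k m.
  rewrite (Phi_encode _ _ _ n);
    [| apply eval_primrec; [apply primrec_const_code | apply den_const_code]].
  unfold const_fun; split; [intro E; injection E as <-; reflexivity | intros ->; reflexivity].
Qed.

Lemma partial_computable_empty : partial_computable_in X (fun _ => None).
Proof.
  exists (encode (cMu cSucc)); intros k m; split; [discriminate|].
  intros [c [E H]]; apply encode_inj in E; subst.
  apply eval_mu_inv in H as [H _]; inversion H.
Qed.

(* On the oracle [g (+) h], [query_shift_code] maps [(a, q)] to [g (q + 1)], and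
   [cComp cOra (const_code 1)] reads off [h 0]. *)
Definition query_shift_code : code :=
  cComp cOra (cComp cSucc (cComp cSucc (cComp double_code cSnd))).

Definition jump_test_code : code :=
  let n := cComp cOra (const_code 1) in
  cComp cZero (cComp (univ query_shift_code) (cPair cZero (cPair n n))).

Definition jump_oracle (k : nat) : nat :=
  match k with 0 => encode jump_test_code | S k => if X k then 1 else 0 end.

Lemma partial_computable_jump_oracle : partial_computable_in X (tot jump_oracle).
Proof.
  set (c := ifz cId (const_code (encode jump_test_code)) (cComp cOra pred_code)).
  assert (Hc : forall k, eval (chi X) c k (jump_oracle k)).
  { assert (Hbase : forall k, eval (chi X) (const_code (encode jump_test_code)) k
      (encode jump_test_code))
      by (intro; apply eval_primrec; [apply primrec_const_code | apply den_const_code]).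
    intros [|k]; unfold c.
    - apply eval_ifz0; [reflexivity | reflexivity | apply Hbase].
    - erewrite eval_ifzS; [| reflexivity | reflexivity | apply Hbase].
      econstructor; [apply eval_primrec; [reflexivity | apply den_pred_code] |].
      constructor; reflexivity. }
  exists (encode c); intros k m; rewrite (Phi_encode _ _ _ _ _ (Hc k)).
  unfold tot; split; [intro E; injection E as <-; reflexivity | intros ->; reflexivity].
Qed.

Lemma eval_jump_test_code n k m :
  eval (join (tot jump_oracle) (const_fun n)) jump_test_code k m <-> m = 0 /\ jump X n.
Proof.
  set (O := join (tot jump_oracle) (const_fun n)).
  assert (Hn : forall v, eval O (cComp cOra (const_code 1)) k v <-> v = n).
  { intro v; split.
    - intro H; apply eval_comp_inv in H as [w [H1 H2]].
      apply (eval_primrec_iff _ _ _ _ (primrec_const_code 1)) in H1; cbn in H1; subst w.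
      inversion H2 as [| | | | | ? ? E | | | | |]; injection E as ->; reflexivity.
    - intros ->; econstructor; [apply eval_den, primrec_const_code | constructor; reflexivity]. }
  assert (HU : forall y,
    eval O (univ query_shift_code) (pair 0 (pair n n)) y <-> Phi n (chi X) n y).
  { intro y; apply (eval_univ _ _ _ (fun q => if X q then 1 else 0)); intro q.
    apply eComp with (S q + S q).
    - apply eval_primrec; [reflexivity | cbn [den]; rewrite den_double_code; den_simpl; lia].
    - constructor; unfold O; rewrite join_even; reflexivity. }
  unfold jump_test_code; split.
  - intro H; apply eval_comp_inv in H as [w [H1 H2]]; inversion H2; subst; split; [reflexivity|].
    apply eval_comp_inv in H1 as [p [H3 H4]]; apply eval_pair_inv in H3 as [u [v [-> [H5 H6]]]].
    inversion H5; subst; apply eval_pair_inv in H6 as [a1 [a2 [-> [H7 H8]]]].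
    apply Hn in H7; apply Hn in H8; subst; apply HU in H4; exists w; exact H4.
  - intros [-> [w Hw]]; econstructor; [| constructor].
    econstructor; [constructor; [constructor | constructor; apply Hn; reflexivity] | apply HU, Hw].
Qed.

Lemma Bapp_jump_in n : jump X n -> Bapp (tot jump_oracle) (const_fun n) (const_fun 0).
Proof.
  intro Hj; apply Bapp_code with jump_test_code; [reflexivity|]; intros k m.
  rewrite eval_jump_test_code; unfold const_fun.
  split; [intro E; injection E as <-; auto | intros [-> _]; reflexivity].
Qed.

Lemma Bapp_jump_out n : ~ jump X n -> Bapp (tot jump_oracle) (const_fun n) (fun _ => None).
Proof.
  intro Hj; apply Bapp_code with jump_test_code; [reflexivity|]; intros k m.
  rewrite eval_jump_test_code; split; [discriminate | intros [_ H]; contradiction].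
Qed.

End Jump.

Theorem corollary6p15 (X Y : nat -> bool) :
  (exists f : BX X -> K2Y Y, pca_embedding X Y f) -> turing_le (jump X) Y.
Proof.
  intros [f [f_inj f_app]].
  pose (F (a : BX X) := proj1_sig (f a)).
  pose (c n := exist _ (const_fun n) (partial_computable_const X n) : BX X).
  pose (empty := exist _ (fun _ => None) (partial_computable_empty X) : BX X).
  pose (succ := c (encode succ_code)).
  pose (hX := exist _ (tot (jump_oracle X)) (partial_computable_jump_oracle X) : BX X).
  pose (t n := if excluded_middle_informative (jump X n) then c 0 else empty).
  assert (g_unif : uniformly_computable_in Y (fun n => F (c n))).
  { apply (K2app_iterate_uniformly_computable _ (F succ)); [apply (proj2_sig (f _)) ..|].
    intro n; apply (f_app succ (c n) (c (S n))), Bapp_succ. }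
  assert (r_unif : uniformly_computable_in Y (fun n => F (t n))).
  { apply (K2app_uniformly_computable _ (F hX) _ _ (proj2_sig (f hX)) g_unif).
    intro n; apply f_app; unfold t; destruct excluded_middle_informative.
    - apply Bapp_jump_in; assumption.
    - apply Bapp_jump_out; assumption. }
  assert (separating : exists p, F (c 0) p <> F empty p).
  { apply not_all_ex_not; intro E; apply functional_extensionality, f_inj in E.
    discriminate (f_equal (fun a => a 0) E). }
  destruct separating as [p Hp].
  apply (turing_le_of_eq_test _ _ _ p (F (c 0) p) r_unif); intro n.
  unfold t; destruct excluded_middle_informative as [Hj|Hj]; split; intro H; auto.
  - contradiction.
  - exfalso; apply Hp; symmetry; exact H.
Qed.
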